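(* Let $(l_n)$ and $(i_n)$ be integer sequences with $1\le l_n\le n$ and $1\le i_n\le n$, such that $l_n/n\to t\in(0,1]$ and $i_n/n\to x\in[0,1]$ with $t\ne x$. Then $$C(n,l_n,i_n)\longrightarrow C(t,x)\qquad(n\to\infty).$$
   Context: Let $H_j=\sum_{i=1}^j1/i$, $a(0,0)=0$ and $a(n,l)=2n+2(n+1)H_n-2(n+3-l)H_{n+1-l}-6l+6$ for $1\le l\le n$ (this is the expected number of comparisons of Quicksort on the fly on $n$ items until the $l$-th smallest is found). For $n\ge1$, $1\le i\le n$ and $1\le l\le n$, $C(n,l,i)=\frac1n\Big(n-1-a(n,l)+\mathbf 1_{l<i}\,a(i-1,l)+\mathbf 1_{l\ge i}\,a(i-1,i-1)+\mathbf 1_{l>i}\,a(n-i,l-i)\Big)$. $C(x)=1+2x\ln x+2(1-x)\ln(1-x)$ for $x\in[0,1]$ (with $0\ln0=0$) and $C(t,x)=C(x)+2\,\mathbf 1_{t<x}\big(-1+x+(1-t)\ln(1-t)-(1-x)\ln(1-x)-(x-t)\ln(x-t)\big)$ for $t,x\in[0,1]$. *)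

From Stdlib Require Import Reals Lra.
Open Scope R_scope.

Fixpoint H (j : nat) : R :=
  match j with
  | O => 0
  | S k => H k + / INR (S k)
  end.

(* a(0,0) = 0 and, for 1 <= l <= n,
   a(n,l) = 2n + 2(n+1)H_n - 2(n+3-l)H_{n+1-l} - 6l + 6.
   (Values outside these ranges are never used by C(n,l,i).) *)
Definition a (n l : nat) : R :=
  match n with
  | O => 0
  | _ => 2 * INR n + 2 * (INR n + 1) * H n
         - 2 * (INR n + 3 - INR l) * H (n + 1 - l)%nat
         - 6 * INR l + 6
  end.

Definition ind (b : bool) : R := if b then 1 else 0.

Definition Cnli (n l i : nat) : R :=
  / INR n * (INR n - 1 - a n l
             + ind (Nat.ltb l i) * a (i - 1)%nat l
             + ind (Nat.leb i l) * a (i - 1)%nat (i - 1)%nat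
             + ind (Nat.ltb i l) * a (n - i)%nat (l - i)%nat).

Definition xlnx (y : R) : R := if Rle_dec y 0 then 0 else y * ln y.

Definition Cx (x : R) : R := 1 + 2 * xlnx x + 2 * xlnx (1 - x).

Definition Ctx (t x : R) : R :=
  Cx x + 2 * (if Rlt_dec t x then 1 else 0) *
         (-1 + x + xlnx (1 - t) - xlnx (1 - x) - xlnx (x - t)).

(* Writing S(m) = m H_m (SH below), the closed form of a(n,l) turns n C(n,l,i) into a short
   linear combination of values of S and of harmonic numbers:
     for l < i:  -n + 2i - 3 + 2(S i + S(n+1-l) - S(n+1) - S(i-l)) + 4H(n+1-l) - 4H(i-l),
     for i < l:   n + 1 + 2(S i + S(n+1-i) - S(n+1)).
   With gamma_m = H_m - ln m, which decreases to Euler's constant, one has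
     S(m)/n = xlnx(m/n) + (m/n) ln n + (m/n) gamma_m.
   For four index sequences a, b, c, d with a + b = c + d the (ln n)-parts cancel
   exactly and the gamma-parts tend to (alpha + beta - gamma - delta) gamma_oo = 0,
   so (S a + S b - S c - S d)/n tends to the same combination of xlnx of the limit
   ratios (SH_combination_limit).  Harmonic numbers are O(sqrt m), hence H/n -> 0. *)

From Pilot Require Import Defs.
From Stdlib Require Import Reals Lra Lia.
Open Scope R_scope.

Lemma cv_eventually_eq (u v : nat -> R) (l : R) (N : nat) :
  (forall n, (N <= n)%nat -> u n = v n) -> Un_cv v l -> Un_cv u l.
Proof.
  intros Heq Hv eps Heps. destruct (Hv eps Heps) as [M HM]. exists (max N M).
  intros n Hn. rewrite Heq by lia. apply HM; lia.
Qed.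

Lemma cv_const (c : R) : Un_cv (fun _ => c) c.
Proof. intros eps He. exists O. intros. unfold Rdist. rewrite Rminus_diag, Rabs_R0. lra. Qed.

(* 1/n -> 0 (with the Stdlib convention /0 = 0 for n = 0). *)
Lemma cv_inv_INR : Un_cv (fun n => / INR n) 0.
Proof.
  intros eps He. destruct (archimed_cor1 eps He) as [N [HN HN0]]. exists N.
  intros n Hn. unfold Rdist. rewrite Rminus_0_r.
  assert (0 < INR N) by (apply lt_0_INR; lia).
  assert (INR N <= INR n) by (apply le_INR; lia).
  rewrite Rabs_right by (left; apply Rinv_0_lt_compat; lra).
  eapply Rle_lt_trans; [|exact HN]. apply Rinv_le_contravar; lra.
Qed.

Lemma cv_dominated_zero (u v : nat -> R) (N : nat) :
  (forall n, (N <= n)%nat -> Rabs (u n) <= v n) -> Un_cv v 0 -> Un_cv u 0.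
Proof.
  intros Hdom Hv eps He. destruct (Hv eps He) as [M HM]. exists (max N M).
  intros n Hn. specialize (HM n ltac:(lia)). specialize (Hdom n ltac:(lia)).
  unfold Rdist in *. rewrite Rminus_0_r in *. apply Rabs_def2 in HM.
  lra.
Qed.

Lemma cv_limit_nonneg (u : nat -> R) (l : R) :
  (forall n, 0 <= u n) -> Un_cv u l -> 0 <= l.
Proof.
  intros Hpos Hu. destruct (Rle_or_lt 0 l) as [h|h]; [exact h|].
  destruct (Hu (- l) ltac:(lra)) as [N HN]. specialize (HN N (le_n _)).
  unfold Rdist in HN. specialize (Hpos N). apply Rabs_def2 in HN. lra.
Qed.

Lemma ratio_pos_limit_diverges (m : nat -> nat) (al : R) :
  0 < al -> Un_cv (fun n => INR (m n) / INR n) al ->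
  forall K : nat, exists N, forall n, (N <= n)%nat -> (K <= m n)%nat.
Proof.
  intros Hal Hm K.
  destruct (Hm (al / 2) ltac:(lra)) as [N1 HN1].
  destruct (archimed_cor1 (al / (2 * (INR K + 1)))) as [N2 [HN2 HN2pos]].
  { pose proof (pos_INR K). apply Rdiv_lt_0_compat; lra. }
  exists (max N1 N2). intros n Hn.
  specialize (HN1 n ltac:(lia)). unfold Rdist in HN1. apply Rabs_def2 in HN1.
  assert (HN2r : 0 < INR N2) by (apply lt_0_INR; lia).
  assert (Hn2 : INR N2 <= INR n) by (apply le_INR; lia).
  assert (Hsmall : 2 * (INR K + 1) < al * INR N2).
  { pose proof (pos_INR K).
    apply (Rmult_lt_compat_r (2 * (INR K + 1) * INR N2)) in HN2; [|nra].
    field_simplify in HN2; lra. }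
  assert (Hlarge : al / 2 * INR n < INR (m n)).
  { replace (INR (m n)) with (INR (m n) / INR n * INR n) by (field; lra).
    apply Rmult_lt_compat_r; lra. }
  assert (INR K < INR (m n)) by nra.
  apply INR_lt in H. lia.
Qed.

(* ln w <= w - 1, from exp y >= 1 + y. *)
Lemma ln_le_pred (w : R) : 0 < w -> ln w <= w - 1.
Proof.
  intros Hw. rewrite <- (ln_exp (w - 1)).
  destruct (Rle_lt_or_eq_dec _ _ (exp_ineq1_le (w - 1))) as [Hlt|Heq].
  - left. apply ln_increasing; lra.
  - rewrite <- Heq. right. f_equal. ring.
Qed.

Lemma ln_le (y z : R) : 0 < y -> y <= z -> ln y <= ln z.
Proof.
  intros Hy Hyz. destruct (Rle_lt_or_eq_dec _ _ Hyz) as [h|h].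
  - left. apply ln_increasing; lra.
  - subst. lra.
Qed.

(* ln y = 2 ln (sqrt y) <= 2 sqrt y: the logarithm is O(sqrt). *)
Lemma ln_le_2sqrt (y : R) : 0 < y -> ln y <= 2 * sqrt y.
Proof.
  intros Hy. pose proof (sqrt_lt_R0 y Hy) as Hs.
  replace (ln y) with (2 * ln (sqrt y)).
  - pose proof (ln_le_pred (sqrt y) Hs). lra.
  - rewrite <- (sqrt_sqrt y) at 2 by lra. rewrite ln_mult by lra. ring.
Qed.

Lemma xlnx_pos (y : R) : 0 < y -> xlnx y = y * ln y.
Proof. intros. unfold xlnx. destruct (Rle_dec y 0); [lra|reflexivity]. Qed.

Lemma xlnx_0 : xlnx 0 = 0.
Proof. unfold xlnx. destruct (Rle_dec 0 0); [reflexivity|lra]. Qed.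

Lemma xlnx_1 : xlnx 1 = 0.
Proof. rewrite xlnx_pos by lra. rewrite ln_1. ring. Qed.

(* |y ln y| <= 2 sqrt y on [0,1]: the modulus of continuity of xlnx at 0. *)
Lemma xlnx_small (y : R) : 0 <= y <= 1 -> Rabs (xlnx y) <= 2 * sqrt y.
Proof.
  intros [Hy Hy1]. destruct (Rle_lt_or_eq_dec _ _ Hy) as [Hpos|<-].
  2:{ rewrite xlnx_0, Rabs_R0. pose proof (sqrt_pos 0). lra. }
  rewrite xlnx_pos by lra.
  pose proof (sqrt_lt_R0 y Hpos) as Hs.
  assert (Hneg : ln y <= 0) by (rewrite <- ln_1; apply ln_le; lra).
  assert (Hinv : - ln y <= 2 * / sqrt y).
  { rewrite <- ln_Rinv, <- sqrt_inv by lra. apply ln_le_2sqrt, Rinv_0_lt_compat; lra. }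
  assert (Hy_sq : y * (2 * / sqrt y) = 2 * sqrt y).
  { rewrite <- (sqrt_sqrt y) at 1 by lra. field. lra. }
  rewrite Rabs_left1 by nra. nra.
Qed.

Lemma cv_xlnx (u : nat -> R) (al : R) :
  (forall n, 0 <= u n) -> Un_cv u al -> Un_cv (fun n => xlnx (u n)) (xlnx al).
Proof.
  intros Hpos Hu. pose proof (cv_limit_nonneg u al Hpos Hu) as Hal.
  destruct (Rle_lt_or_eq_dec _ _ Hal) as [Halpos|<-].
  - destruct (Hu al Halpos) as [N HN].
    apply (cv_eventually_eq _ (fun n => u n * ln (u n)) _ N).
    { intros n Hn. specialize (HN n Hn). unfold Rdist in HN. apply Rabs_def2 in HN.
      apply xlnx_pos. lra. }
    rewrite xlnx_pos by lra. apply CV_mult; [exact Hu|].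
    apply (continuity_seq ln u al); [|exact Hu].
    apply derivable_continuous_pt. exact (exist _ (/ al) (derivable_pt_lim_ln al Halpos)).
  - rewrite xlnx_0. destruct (Hu 1 ltac:(lra)) as [N HN].
    apply (cv_dominated_zero _ (fun n => 2 * sqrt (u n)) N).
    { intros n Hn. specialize (HN n Hn). unfold Rdist in HN. rewrite Rminus_0_r in HN.
      apply Rabs_def2 in HN. apply xlnx_small. specialize (Hpos n). lra. }
    replace 0 with (2 * sqrt 0) by (rewrite sqrt_0; ring).
    apply (CV_mult (fun _ => 2)); [apply cv_const|].
    apply continuity_seq; [apply continuity_pt_sqrt; lra|exact Hu].
Qed.

Lemma H_S (k : nat) : H (S k) = H k + / INR (S k).
Proof. reflexivity. Qed.

Lemma H_nonneg (m : nat) : 0 <= H m.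
Proof.
  induction m as [|m IH]; [simpl; lra|]. rewrite H_S.
  assert (0 < / INR (S m)) by (apply Rinv_0_lt_compat, lt_0_INR; lia). lra.
Qed.

(* ln(m+1) <= H_m, from ln(1 + 1/k) <= 1/k. *)
Lemma ln_succ_le_H (m : nat) : ln (INR m + 1) <= H m.
Proof.
  induction m as [|m IH]. { simpl. rewrite Rplus_0_l, ln_1. lra. }
  rewrite H_S, S_INR. assert (Hp : 0 < INR m + 1) by (pose proof (pos_INR m); lra).
  pose proof (Rinv_0_lt_compat _ Hp) as Hinv.
  replace (INR m + 1 + 1) with ((INR m + 1) * (1 + / (INR m + 1))) by (field; lra).
  rewrite ln_mult by lra.
  pose proof (ln_le_pred (1 + / (INR m + 1))). lra.
Qed.

Lemma ln_0 : ln 0 = 0.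
Proof. unfold ln. destruct (Rlt_dec 0 0) as [h|h]; [exfalso; exact (Rlt_irrefl 0 h)|reflexivity]. Qed.

Definition gamma (m : nat) : R := H m - ln (INR m).

Lemma gamma_nonneg (m : nat) : 0 <= gamma m.
Proof.
  unfold gamma. destruct m as [|m]. { simpl. rewrite ln_0. lra. }
  pose proof (ln_succ_le_H (S m)). assert (0 < INR (S m)) by (apply lt_0_INR; lia).
  pose proof (ln_le (INR (S m)) (INR (S m) + 1) ltac:(lra) ltac:(lra)). lra.
Qed.

(* gamma_(m+1) <= gamma_m, from ln(1 - 1/(m+1)) <= -1/(m+1). *)
Lemma gamma_decreasing (m : nat) : (1 <= m)%nat -> gamma (S m) <= gamma m.
Proof.
  intros Hm. unfold gamma. rewrite H_S, S_INR.
  assert (Hp : 0 < INR m) by (apply lt_0_INR; lia).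
  assert (Hq : 0 < / (INR m + 1) < 1).
  { split; [apply Rinv_0_lt_compat; lra|].
    rewrite <- Rinv_1. apply Rinv_lt_contravar; lra. }
  replace (INR m) with ((INR m + 1) * (1 - / (INR m + 1))) at 3 by (field; lra).
  rewrite ln_mult by lra.
  pose proof (ln_le_pred (1 - / (INR m + 1))). lra.
Qed.

(* gamma_1 = 1 and gamma decreases from there on. *)
Lemma gamma_le_1 (m : nat) : gamma m <= 1.
Proof.
  destruct m as [|m]. { unfold gamma. simpl. rewrite ln_0. lra. }
  induction m as [|m IH]. { unfold gamma. simpl. rewrite Rplus_0_l, ln_1. lra. }
  pose proof (gamma_decreasing (S m) ltac:(lia)). lra.
Qed.

(* Existence of Euler's constant: gamma is eventually decreasing and bounded below. *)
Lemma gamma_cv : exists g0, Un_cv gamma g0.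
Proof.
  destruct (decreasing_cv (fun k => gamma (S k))) as [g0 Hg0].
  - intros k. apply gamma_decreasing. lia.
  - exists 0. intros r [k ->]. unfold opp_seq. pose proof (gamma_nonneg (S k)). lra.
  - exists g0. apply (CV_shift gamma 1). intros eps He. destruct (Hg0 eps He) as [N HN].
    exists N. intros n Hn. rewrite Nat.add_1_r. apply HN, Hn.
Qed.

Lemma H_le_3sqrt (m : nat) : H m <= 3 * sqrt (INR m).
Proof.
  destruct m as [|m]. { simpl. rewrite sqrt_0. lra. }
  assert (Hm : 1 <= INR (S m)) by (rewrite S_INR; pose proof (pos_INR m); lra).
  assert (Hsqrt : 1 <= sqrt (INR (S m))) by (rewrite <- sqrt_1; apply sqrt_le_1_alt; lra).
  pose proof (gamma_le_1 (S m)). pose proof (ln_le_2sqrt (INR (S m)) ltac:(lra)).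
  unfold gamma in *. lra.
Qed.

Lemma H_over_n (p : nat -> nat) (N : nat) :
  (forall n, (N <= n)%nat -> (p n <= n + 1)%nat) -> Un_cv (fun n => H (p n) / INR n) 0.
Proof.
  intros Hp. apply (cv_dominated_zero _ (fun n => 3 * sqrt (2 * / INR n)) (max N 1)).
  - intros n Hn. specialize (Hp n ltac:(lia)).
    assert (Hn0 : 1 <= INR n) by (apply (le_INR 1); lia).
    assert (Hpn : INR (p n) <= 2 * INR n) by (replace 2 with (INR 2) by reflexivity; rewrite <- mult_INR; apply le_INR; lia).
    pose proof (sqrt_lt_R0 (INR n) ltac:(lra)) as Hs.
    pose proof (sqrt_sqrt (INR n) ltac:(lra)) as Hss.
    assert (Hroot : sqrt (2 * INR n) / INR n = sqrt (2 * / INR n)).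
    { rewrite !sqrt_mult_alt, sqrt_inv by lra.
      replace (INR n) with (sqrt (INR n) * sqrt (INR n)) at 2 by exact Hss. field. lra. }
    assert (Hbound : H (p n) <= 3 * sqrt (2 * INR n)).
    { pose proof (H_le_3sqrt (p n)). pose proof (sqrt_le_1_alt _ _ Hpn). lra. }
    rewrite Rabs_right by (apply Rle_ge, Rmult_le_pos; [apply H_nonneg|left; apply Rinv_0_lt_compat; lra]).
    rewrite <- Hroot. unfold Rdiv. rewrite <- Rmult_assoc.
    apply Rmult_le_compat_r; [left; apply Rinv_0_lt_compat; lra|exact Hbound].
  - replace 0 with (3 * sqrt (2 * 0)) by (rewrite Rmult_0_r, sqrt_0; ring).
    apply (CV_mult (fun _ => 3)); [apply cv_const|].
    apply continuity_seq; [apply continuity_pt_sqrt; lra|].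
    apply (CV_mult (fun _ => 2)); [apply cv_const|apply cv_inv_INR].
Qed.

Lemma ratio_nonneg (m n : nat) : 0 <= INR m / INR n.
Proof.
  destruct n as [|n]. { simpl. unfold Rdiv. rewrite Rinv_0. lra. }
  apply Rmult_le_pos; [apply pos_INR|]. left. apply Rinv_0_lt_compat, lt_0_INR; lia.
Qed.

(* (m_n/n) gamma(m_n) -> alpha gamma_oo: either m_n -> oo, or the bounded factor
   gamma(m_n) is killed by m_n/n -> 0. *)
Lemma cv_gamma_weighted (m : nat -> nat) (al g0 : R) :
  Un_cv gamma g0 -> Un_cv (fun n => INR (m n) / INR n) al ->
  Un_cv (fun n => INR (m n) / INR n * gamma (m n)) (al * g0).
Proof.
  intros Hg Hm. pose proof (cv_limit_nonneg _ al (fun n => ratio_nonneg (m n) n) Hm) as Hal.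
  destruct (Rle_lt_or_eq_dec _ _ Hal) as [Halpos|<-].
  - apply CV_mult; [exact Hm|]. intros eps He.
    destruct (Hg eps He) as [K HK].
    destruct (ratio_pos_limit_diverges m al Halpos Hm K) as [N HN].
    exists N. intros n Hn. apply HK, HN, Hn.
  - rewrite Rmult_0_l. apply (cv_dominated_zero _ (fun n => INR (m n) / INR n) O); [|exact Hm].
    intros n _. pose proof (gamma_nonneg (m n)). pose proof (gamma_le_1 (m n)).
    pose proof (ratio_nonneg (m n) n).
    rewrite Rabs_right by (apply Rle_ge, Rmult_le_pos; lra). nra.
Qed.

(* S(m) = m H_m, the quantity in which the closed form of a(n,l) is expressed. *)
Definition SH (m : nat) : R := INR m * H m.

Lemma SH_over_n (m n : nat) : 0 < INR n -> SH m / INR n =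
  xlnx (INR m / INR n) + INR m / INR n * ln (INR n) + INR m / INR n * gamma m.
Proof.
  intros Hn. destruct m as [|m].
  - unfold SH. simpl INR. unfold Rdiv. rewrite !Rmult_0_l, xlnx_0. ring.
  - assert (Hm : 0 < INR (S m)) by (apply lt_0_INR; lia).
    rewrite xlnx_pos by (apply Rdiv_lt_0_compat; lra).
    unfold Rdiv. rewrite ln_mult, ln_Rinv by (try apply Rinv_0_lt_compat; lra).
    unfold SH, gamma. field. lra.
Qed.

Lemma SH_combination_limit (a b c d : nat -> nat) (al be ga de : R) (N : nat) :
  (forall n, (N <= n)%nat -> (a n + b n = c n + d n)%nat) ->
  Un_cv (fun n => INR (a n) / INR n) al ->
  Un_cv (fun n => INR (b n) / INR n) be ->
  Un_cv (fun n => INR (c n) / INR n) ga ->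
  Un_cv (fun n => INR (d n) / INR n) de ->
  Un_cv (fun n => (SH (a n) + SH (b n) - SH (c n) - SH (d n)) / INR n)
        (xlnx al + xlnx be - xlnx ga - xlnx de).
Proof.
  intros Hsum Ha Hb Hc Hd. destruct gamma_cv as [g0 Hg].
  set (r := fun (m : nat -> nat) n => INR (m n) / INR n).
  assert (Hratios : forall n, (N <= n)%nat -> r a n + r b n - r c n - r d n = 0).
  { intros n Hn. unfold r, Rdiv.
    assert (E : INR (a n) + INR (b n) = INR (c n) + INR (d n))
      by (rewrite <- !plus_INR; f_equal; exact (Hsum n Hn)).
    replace (INR (a n)) with (INR (c n) + INR (d n) - INR (b n)) by lra. ring. }
  assert (Hlimits : al + be - ga - de = 0).
  { apply (UL_sequence (fun n => r a n + r b n - r c n - r d n)).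
    - exact (CV_minus _ _ _ _ (CV_minus _ _ _ _ (CV_plus _ _ _ _ Ha Hb) Hc) Hd).
    - exact (cv_eventually_eq _ _ _ N Hratios (cv_const 0)). }
  pose proof (fun m lim Hm => cv_xlnx (r m) lim (fun n => ratio_nonneg (m n) n) Hm) as X.
  pose proof (fun m lim Hm => cv_gamma_weighted m lim g0 Hg Hm) as G.
  pose proof (CV_plus _ _ _ _
    (CV_minus _ _ _ _ (CV_minus _ _ _ _ (CV_plus _ _ _ _ (X _ _ Ha) (X _ _ Hb)) (X _ _ Hc)) (X _ _ Hd))
    (CV_minus _ _ _ _ (CV_minus _ _ _ _ (CV_plus _ _ _ _ (G _ _ Ha) (G _ _ Hb)) (G _ _ Hc)) (G _ _ Hd)))
    as Hcomb.
  replace (al * g0 + be * g0 - ga * g0 - de * g0) with ((al + be - ga - de) * g0) in Hcomb by ring.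
  rewrite Hlimits, Rmult_0_l, Rplus_0_r in Hcomb.
  refine (cv_eventually_eq _ _ _ (max N 1) _ Hcomb). intros n Hn.
  assert (Hn0 : 0 < INR n) by (apply lt_0_INR; lia).
  pose proof (Hratios n ltac:(lia)) as Hr. unfold r in *.
  assert (Hlog : (INR (a n) / INR n + INR (b n) / INR n - INR (c n) / INR n
                  - INR (d n) / INR n) * ln (INR n) = 0) by (rewrite Hr; ring).
  replace ((SH (a n) + SH (b n) - SH (c n) - SH (d n)) / INR n) with
    (SH (a n) / INR n + SH (b n) / INR n - SH (c n) / INR n - SH (d n) / INR n)
    by (field; lra).
  rewrite !(SH_over_n _ n Hn0). lra.
Qed.

Lemma a_pos (n l : nat) : (1 <= n)%nat -> a n l = 2 * INR n + 2 * (INR n + 1) * H n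
  - 2 * (INR n + 3 - INR l) * H (n + 1 - l)%nat - 6 * INR l + 6.
Proof. intros; destruct n; [lia|reflexivity]. Qed.

(* S(m) = m H_(m-1) + 1: rewrites the products (m+1) H_m occurring in a(n,l). *)
Lemma SH_pred (m : nat) : (1 <= m)%nat -> SH m = INR m * H (m - 1)%nat + 1.
Proof.
  intros Hm; destruct m as [|m]; [lia|]. replace (S m - 1)%nat with m by lia.
  unfold SH. rewrite H_S. assert (0 < INR (S m)) by (apply lt_0_INR; lia). field; lra.
Qed.

(* a(i-1,i-1), the cost of finding the maximum, in terms of S. *)
Lemma a_diag (i : nat) : (1 <= i)%nat -> a (i - 1) (i - 1) = -4 * (INR i - 1) + 2 * (SH i - 1).
Proof.
  intros Hi. rewrite (SH_pred i) by lia.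
  destruct (Nat.eq_dec i 1) as [->|Hne]. { simpl. lra. }
  rewrite a_pos by lia. replace (i - 1 + 1 - (i - 1))%nat with 1%nat by lia.
  rewrite minus_INR by lia. simpl H. simpl INR. field.
Qed.

Lemma Cnli_l_lt_i (n l i : nat) : (1 <= l)%nat -> (l < i)%nat -> (i <= n)%nat ->
  Cnli n l i = (- INR n + 2 * INR i - 3
     + 2 * (SH i + SH (n + 1 - l) - SH (n + 1) - SH (i - l))
     + 4 * H (n + 1 - l) - 4 * H (i - l)) / INR n.
Proof.
  intros Hl Hli Hin. unfold Cnli.
  replace (Nat.ltb l i) with true by (symmetry; apply Nat.ltb_lt; lia).
  replace (Nat.leb i l) with false by (symmetry; apply Nat.leb_gt; lia).
  replace (Nat.ltb i l) with false by (symmetry; apply Nat.ltb_ge; lia).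
  unfold Defs.ind. rewrite (a_pos n l), (a_pos (i - 1) l) by lia.
  replace (i - 1 + 1 - l)%nat with (i - l)%nat by lia.
  rewrite (SH_pred i), (SH_pred (n + 1)) by lia.
  replace (n + 1 - 1)%nat with n by lia.
  unfold SH. rewrite !minus_INR, !plus_INR by lia.
  assert (Hn : 0 < INR n) by (apply lt_0_INR; lia). simpl INR. field. lra.
Qed.

Lemma Cnli_i_lt_l (n l i : nat) : (1 <= i)%nat -> (i < l)%nat -> (l <= n)%nat ->
  Cnli n l i = (INR n + 1 + 2 * (SH i + SH (n + 1 - i) - SH (n + 1))) / INR n.
Proof.
  intros Hi Hil Hln. unfold Cnli.
  replace (Nat.ltb l i) with false by (symmetry; apply Nat.ltb_ge; lia).
  replace (Nat.leb i l) with true by (symmetry; apply Nat.leb_le; lia).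
  replace (Nat.ltb i l) with true by (symmetry; apply Nat.ltb_lt; lia).
  unfold Defs.ind. rewrite a_diag by lia.
  rewrite (a_pos n l), (a_pos (n - i) (l - i)) by lia.
  replace (n - i + 1 - (l - i))%nat with (n + 1 - l)%nat by lia.
  rewrite (SH_pred (n + 1 - i)), (SH_pred (n + 1)) by lia.
  replace (n + 1 - 1)%nat with n by lia.
  replace (n + 1 - i - 1)%nat with (n - i)%nat by lia.
  rewrite !minus_INR, !plus_INR by lia.
  assert (Hn : 0 < INR n) by (apply lt_0_INR; lia). simpl INR. field. lra.
Qed.

Lemma cv_succ_ratio : Un_cv (fun n => INR (n + 1) / INR n) 1.
Proof.
  pose proof (CV_plus _ _ _ _ (cv_const 1) cv_inv_INR) as Hlim. rewrite Rplus_0_r in Hlim.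
  refine (cv_eventually_eq _ _ _ 1 _ Hlim). intros n Hn.
  assert (0 < INR n) by (apply lt_0_INR; lia). rewrite plus_INR. simpl INR. field. lra.
Qed.

Lemma cv_complement_ratio (l : nat -> nat) (t : R) :
  (forall n, (1 <= n)%nat -> (l n <= n)%nat) ->
  Un_cv (fun n => INR (l n) / INR n) t -> Un_cv (fun n => INR (n + 1 - l n) / INR n) (1 - t).
Proof.
  intros Hl Ht. pose proof (CV_minus _ _ _ _ cv_succ_ratio Ht) as Hlim.
  refine (cv_eventually_eq _ _ _ 1 _ Hlim). intros n Hn. specialize (Hl n Hn).
  rewrite minus_INR by lia. unfold Rdiv. ring.
Qed.

Lemma eventually_lt (l i : nat -> nat) (t x : R) : t < x ->
  Un_cv (fun n => INR (l n) / INR n) t -> Un_cv (fun n => INR (i n) / INR n) x ->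
  exists N, forall n, (N <= n)%nat -> (l n < i n)%nat.
Proof.
  intros Htx Hl Hi. destruct (CV_minus _ _ _ _ Hi Hl (x - t) ltac:(lra)) as [N HN].
  exists (max N 1). intros n Hn. specialize (HN n ltac:(lia)). unfold Rdist in HN.
  apply Rabs_def2 in HN. assert (Hn0 : 0 < INR n) by (apply lt_0_INR; lia).
  apply INR_lt.
  replace (INR (l n)) with (INR (l n) / INR n * INR n) by (field; lra).
  replace (INR (i n)) with (INR (i n) / INR n * INR n) by (field; lra).
  apply Rmult_lt_compat_r; lra.
Qed.

Lemma limit_l_lt_i (l i : nat -> nat) (t x : R)
  (hl : forall n, (1 <= n)%nat -> (1 <= l n <= n)%nat)
  (hi : forall n, (1 <= n)%nat -> (1 <= i n <= n)%nat) (htx : t < x)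
  (hlt : Un_cv (fun n => INR (l n) / INR n) t)
  (hix : Un_cv (fun n => INR (i n) / INR n) x) :
  Un_cv (fun n => Cnli n (l n) (i n)) (-1 + 2 * x + 2 * (xlnx x + xlnx (1 - t) - xlnx (x - t))).
Proof.
  destruct (eventually_lt l i t x htx hlt hix) as [N HN].
  assert (Hdiff : Un_cv (fun n => INR (i n - l n) / INR n) (x - t)).
  { refine (cv_eventually_eq _ _ _ N _ (CV_minus _ _ _ _ hix hlt)). intros n Hn.
    specialize (HN n Hn). rewrite minus_INR by lia. unfold Rdiv. ring. }
  pose proof (SH_combination_limit i (fun n => n + 1 - l n)%nat (fun n => n + 1)%nat
    (fun n => i n - l n)%nat x (1 - t) 1 (x - t) (max N 1)
    (fun n Hn => ltac:(cbv beta; specialize (HN n ltac:(lia)); specialize (hl n ltac:(lia)); lia))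
    hix (cv_complement_ratio l t (fun n Hn => proj2 (hl n Hn)) hlt) cv_succ_ratio Hdiff)
    as HS.
  pose proof (H_over_n (fun n => n + 1 - l n)%nat O (fun n _ => ltac:(cbv beta; lia))) as HH1.
  pose proof (H_over_n (fun n => i n - l n)%nat 1
    (fun n Hn => ltac:(cbv beta; specialize (hi n Hn); lia))) as HH2.
  pose proof (CV_minus _ _ _ _ (CV_plus _ _ _ _ (CV_plus _ _ _ _
    (CV_minus _ _ _ _ (CV_plus _ _ _ _ (cv_const (-1)) (CV_mult _ _ _ _ (cv_const 2) hix))
      (CV_mult _ _ _ _ (cv_const 3) cv_inv_INR))
    (CV_mult _ _ _ _ (cv_const 2) HS)) (CV_mult _ _ _ _ (cv_const 4) HH1))
    (CV_mult _ _ _ _ (cv_const 4) HH2)) as Hlim.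
  rewrite xlnx_1 in Hlim.
  replace (-1 + 2 * x - 3 * 0 + 2 * (xlnx x + xlnx (1 - t) - 0 - xlnx (x - t)) + 4 * 0 - 4 * 0)
    with (-1 + 2 * x + 2 * (xlnx x + xlnx (1 - t) - xlnx (x - t))) in Hlim by ring.
  refine (cv_eventually_eq _ _ _ (max N 1) _ Hlim). intros n Hn.
  specialize (HN n ltac:(lia)). pose proof (hl n ltac:(lia)). pose proof (hi n ltac:(lia)).
  rewrite Cnli_l_lt_i by lia. assert (0 < INR n) by (apply lt_0_INR; lia). field. lra.
Qed.

Lemma limit_i_lt_l (l i : nat -> nat) (t x : R)
  (hl : forall n, (1 <= n)%nat -> (1 <= l n <= n)%nat)
  (hi : forall n, (1 <= n)%nat -> (1 <= i n <= n)%nat) (hxt : x < t)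
  (hlt : Un_cv (fun n => INR (l n) / INR n) t)
  (hix : Un_cv (fun n => INR (i n) / INR n) x) :
  Un_cv (fun n => Cnli n (l n) (i n)) (Cx x).
Proof.
  destruct (eventually_lt i l x t hxt hix hlt) as [N HN].
  assert (Hzero : Un_cv (fun n => INR ((fun _ => 0%nat) n) / INR n) 0).
  { refine (cv_eventually_eq _ _ _ O _ (cv_const 0)). intros n _. simpl. unfold Rdiv. ring. }
  pose proof (SH_combination_limit i (fun n => n + 1 - i n)%nat (fun n => n + 1)%nat
    (fun _ => 0%nat) x (1 - x) 1 0 1
    (fun n Hn => ltac:(cbv beta; specialize (hi n Hn); lia))
    hix (cv_complement_ratio i x (fun n Hn => proj2 (hi n Hn)) hix) cv_succ_ratio Hzero)
    as HS.
  pose proof (CV_plus _ _ _ _ (CV_plus _ _ _ _ (cv_const 1) cv_inv_INR)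
    (CV_mult _ _ _ _ (cv_const 2) HS)) as Hlim.
  rewrite xlnx_1, xlnx_0 in Hlim.
  replace (1 + 0 + 2 * (xlnx x + xlnx (1 - x) - 0 - 0)) with (Cx x) in Hlim
    by (unfold Cx; ring).
  refine (cv_eventually_eq _ _ _ (max N 1) _ Hlim). intros n Hn.
  specialize (HN n ltac:(lia)). pose proof (hl n ltac:(lia)). pose proof (hi n ltac:(lia)).
  rewrite Cnli_i_lt_l by lia. assert (0 < INR n) by (apply lt_0_INR; lia).
  replace (SH 0) with 0 by (unfold SH; simpl; ring). field. lra.
Qed.

Theorem proposition5p5 (l i : nat -> nat) (t x : R)
  (hl : forall n : nat, (1 <= n)%nat -> (1 <= l n <= n)%nat)
  (hi : forall n : nat, (1 <= n)%nat -> (1 <= i n <= n)%nat)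
  (ht : 0 < t <= 1) (hx : 0 <= x <= 1) (htx : t <> x)
  (hlt : Un_cv (fun n => INR (l n) / INR n) t)
  (hix : Un_cv (fun n => INR (i n) / INR n) x) :
  Un_cv (fun n => Cnli n (l n) (i n)) (Ctx t x).
Proof.
  unfold Ctx. destruct (Rlt_dec t x) as [Htx|Hxt].
  - replace (Cx x + 2 * 1 * (-1 + x + xlnx (1 - t) - xlnx (1 - x) - xlnx (x - t)))
      with (-1 + 2 * x + 2 * (xlnx x + xlnx (1 - t) - xlnx (x - t))) by (unfold Cx; ring).
    exact (limit_l_lt_i l i t x hl hi Htx hlt hix).
  - rewrite Rmult_0_r, Rmult_0_l, Rplus_0_r.
    exact (limit_i_lt_l l i t x hl hi ltac:(lra) hlt hix).
Qed.
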